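(* Let $E$ be an arbitrary graph, $X\subseteq{\rm Reg}(E)$, $Y={\rm Reg}(E)\setminus X$, and suppose $E$ satisfies Relative Condition (L). Let $A$ be a ring and $\pi:C_K^X(E)\to A$ a ring homomorphism such that (i) $\pi(u)\neq0$ for every vertex $u\in E^0\setminus Y$; (ii) $\pi\big(v-\sum_{e\in s^{-1}(v)}ee^*\big)\ne0$ for every $v\in Y$; and (iii) $\pi\big(\sum_{e\in s^{-1}(v)}ee^*\big)\neq0$ for every $v\in Y$. Then $\pi$ is injective.
   Context: Let $K$ be a field and $E=(E^0,E^1,r,s)$ a directed graph (no countability or finiteness assumptions). A vertex $v$ is regular if $s^{-1}(v)$ is finite and nonempty; ${\rm Reg}(E)$ is the set of regular vertices. For $X\subseteq{\rm Reg}(E)$, the relative Cohn path algebra $C_K^X(E)$ is the free $K$-algebra generated by $E^0\cup E^1\cup\{e^*:e\in E^1\}$ subject to: $vw=\delta_{v,w}v$; $s(e)e=er(e)=e$ and $r(e)e^*=e^*s(e)=e^*$; $e^*f=\delta_{e,f}r(e)$; $v=\sum_{e\in s^{-1}(v)}ee^*$ for every $v\in X$. A cycle is a path $e_1\cdots e_n$ ($n\ge1$) with $r(e_n)=s(e_1)$ and $s(e_i)\ne s(e_j)$ for $i\ne j$. An exit of $e_1\cdots e_n$ is an edge $e$ with $s(e)=s(e_i)$ for some $i$ and $e\ne e_i$. $E$ satisfies Relative Condition (L) (with respect to $X$) if every cycle $e_1\cdots e_n$ with $s(e_i)\notin Y$ for all $i=1,\dots,n$ has an exit. *)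

From HB Require Import structures.
From mathcomp Require Import all_boot all_algebra.
From Stdlib Require Import List.

Set Implicit Arguments. Unset Strict Implicit. Unset Printing Implicit Defensive.
Import GRing.Theory.
Local Open Scope ring_scope.

(* A directed graph E = (E^0, E^1, r, s) is given by a vertex type V,
   an edge type Ed and maps r s : Ed -> V (no finiteness assumptions). *)

Definition enumerates (V Ed : Type) (s : Ed -> V) (v : V) (l : list Ed) : Prop :=
  List.NoDup l /\ forall e, List.In e l <-> s e = v.

Definition regular (V Ed : Type) (s : Ed -> V) (v : V) : Prop :=
  exists l, enumerates s v l /\ l <> nil.

Definition Yset (V Ed : Type) (s : Ed -> V) (X : V -> Prop) (v : V) : Prop :=
  regular s v /\ ~ X v.

Fixpoint is_path (V Ed : Type) (r s : Ed -> V) (p : list Ed) : Prop :=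
  match p with
  | nil => True
  | e :: q => match q with
              | nil => True
              | f :: _ => r e = s f /\ is_path r s q
              end
  end.

Definition is_cycle (V Ed : Type) (r s : Ed -> V) (p : list Ed) : Prop :=
  match p with
  | nil => False
  | e1 :: _ => is_path r s p /\ r (List.last p e1) = s e1 /\ List.NoDup (List.map s p)
  end.

Definition has_exit (V Ed : Type) (s : Ed -> V) (p : list Ed) : Prop :=
  exists e f, List.In f p /\ s e = s f /\ e <> f.

Definition relative_condL (V Ed : Type) (r s : Ed -> V) (X : V -> Prop) : Prop :=
  forall p, is_cycle r s p -> (forall f, List.In f p -> ~ Yset s X (s f)) ->
    has_exit s p.

(* Terms of the free (non-unital) K-algebra on E^0 ∪ E^1 ∪ {e^*} *)
Inductive cterm (K V Ed : Type) : Type :=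
| cV : V -> cterm K V Ed
| cE : Ed -> cterm K V Ed
| cG : Ed -> cterm K V Ed          (* ghost edge e^* *)
| c0 : cterm K V Ed
| cadd : cterm K V Ed -> cterm K V Ed -> cterm K V Ed
| cneg : cterm K V Ed -> cterm K V Ed
| cmul : cterm K V Ed -> cterm K V Ed -> cterm K V Ed
| cscal : K -> cterm K V Ed -> cterm K V Ed.

Arguments c0 {K V Ed}.

Fixpoint sumEE (K V Ed : Type) (l : list Ed) : cterm K V Ed :=
  match l with
  | nil => c0
  | e :: q => cadd (cmul (cE K V e) (cG K V e)) (sumEE K V q)
  end.

(* Equality in C_K^X(E): the least congruence containing the
   (non-unital, associative) K-algebra axioms and the defining relations. *)
Inductive cohn_eq (K : fieldType) (V Ed : Type) (r s : Ed -> V) (X : V -> Prop)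
  : cterm K V Ed -> cterm K V Ed -> Prop :=
| ce_refl x : cohn_eq r s X x x
| ce_sym x y : cohn_eq r s X x y -> cohn_eq r s X y x
| ce_trans x y z : cohn_eq r s X x y -> cohn_eq r s X y z -> cohn_eq r s X x z
| ce_add x x' y y' : cohn_eq r s X x x' -> cohn_eq r s X y y' ->
    cohn_eq r s X (cadd x y) (cadd x' y')
| ce_neg x x' : cohn_eq r s X x x' -> cohn_eq r s X (cneg x) (cneg x')
| ce_mul x x' y y' : cohn_eq r s X x x' -> cohn_eq r s X y y' ->
    cohn_eq r s X (cmul x y) (cmul x' y')
| ce_scal c x x' : cohn_eq r s X x x' -> cohn_eq r s X (cscal c x) (cscal c x')
| ce_addA x y z : cohn_eq r s X (cadd x (cadd y z)) (cadd (cadd x y) z)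
| ce_addC x y : cohn_eq r s X (cadd x y) (cadd y x)
| ce_add0 x : cohn_eq r s X (cadd c0 x) x
| ce_addN x : cohn_eq r s X (cadd (cneg x) x) c0
| ce_mulA x y z : cohn_eq r s X (cmul x (cmul y z)) (cmul (cmul x y) z)
| ce_mulDl x y z : cohn_eq r s X (cmul (cadd x y) z) (cadd (cmul x z) (cmul y z))
| ce_mulDr x y z : cohn_eq r s X (cmul x (cadd y z)) (cadd (cmul x y) (cmul x z))
| ce_scalDl (a b : K) x : cohn_eq r s X (cscal (a + b) x) (cadd (cscal a x) (cscal b x))
| ce_scalDr (a : K) x y : cohn_eq r s X (cscal a (cadd x y)) (cadd (cscal a x) (cscal a y))
| ce_scalA (a b : K) x : cohn_eq r s X (cscal (a * b) x) (cscal a (cscal b x))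
| ce_scal1 x : cohn_eq r s X (cscal 1 x) x
| ce_scalMl (a : K) x y : cohn_eq r s X (cscal a (cmul x y)) (cmul (cscal a x) y)
| ce_scalMr (a : K) x y : cohn_eq r s X (cscal a (cmul x y)) (cmul x (cscal a y))
| ce_vv v : cohn_eq r s X (cmul (cV K Ed v) (cV K Ed v)) (cV K Ed v)
| ce_vw v w : v <> w -> cohn_eq r s X (cmul (cV K Ed v) (cV K Ed w)) c0
| ce_se e : cohn_eq r s X (cmul (cV K Ed (s e)) (cE K V e)) (cE K V e)
| ce_er e : cohn_eq r s X (cmul (cE K V e) (cV K Ed (r e))) (cE K V e)
| ce_rg e : cohn_eq r s X (cmul (cV K Ed (r e)) (cG K V e)) (cG K V e)
| ce_gs e : cohn_eq r s X (cmul (cG K V e) (cV K Ed (s e))) (cG K V e)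
| ce_ge e : cohn_eq r s X (cmul (cG K V e) (cE K V e)) (cV K Ed (r e))
| ce_gf e f : e <> f -> cohn_eq r s X (cmul (cG K V e) (cE K V f)) c0
| ce_CK v l : X v -> enumerates s v l -> cohn_eq r s X (cV K Ed v) (sumEE K V l).

(* Every element of C_K^X(E) is a combination of monomials a b^* (a, b paths
   ending at a common vertex), so it suffices to show that a combination x of
   monomials with pi(x) = 0 vanishes.  Right multiplication by the edges leaving
   the range vertex w of the ghost parts shortens them; then x is recovered by
   the Cuntz-Krieger relation if w is in X, by the gap idempotent
   q_w = w - sum e e^* if w is in Y, and otherwise some edge leaving w is not a
   first ghost edge (w is not regular) and kills the ghost terms.  This reduces
   everything to combinations of real paths, and multiplying such a combination
   on the left by the ghost of a shortest term leaves c w + (closed paths at w)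
   with c the weight of that term.  Such a loop sum is never killed by pi when
   c <> 0: a loop through a vertex with an exit is conjugated away by the exit,
   a loop through a vertex of Y is killed by its gap idempotent, and by Relative
   Condition (L) every loop is of one of these kinds; finally pi(c w) <> 0 by (i)
   and (ii). *)

From HB Require Import structures.
From mathcomp Require Import all_boot all_algebra zify.
From Stdlib Require Import List Setoid Morphisms Classical Lia Wf_nat.
Import GRing.Theory.
Set Implicit Arguments. Unset Strict Implicit.

Local Open Scope ring_scope.

Lemma measure_ind (A : Type) (f : A -> nat) (P : A -> Prop) :
  (forall x, (forall y, (f y < f x)%coq_nat -> P y) -> P x) -> forall x, P x.
Proof. exact: induction_ltof1. Qed.

Lemma exists_argmin (A : Type) (g : A -> nat) (L : list A) : L <> nil ->
  exists x, In x L /\ forall y, In y L -> (g x <= g y)%coq_nat.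
Proof.
elim: L => [|a [|b L] IH] // _; first by exists a; split=> [|y [<-|[]]]; [left | lia].
have [x [hx hm]] := IH ltac:(done).
case: (Compare_dec.le_lt_dec (g a) (g x)) => h.
  by exists a; split=> [|y [<-|/hm]]; [left | lia | lia].
by exists x; split=> [|y [<-|/hm]]; [right | lia | done].
Qed.

Lemma In_length_pos (A : Type) (x : A) L : In x L -> (0 < length L)%coq_nat.
Proof. by case: L => [|? ?] //= _; lia. Qed.

Lemma exists_NoDup_same (A : Type) (F : list A) :
  exists l, NoDup l /\ forall x, In x l <-> In x F.
Proof.
elim: F => [|a F [l [h1 h2]]]; first by exists nil; split; [constructor | done].
case: (classic (In a l)) => ha.
  by exists l; split=> // x; rewrite h2; split; [right | case=> [<-|//]; rewrite -h2].
by exists (a :: l); split; [constructor | move=> x /=; rewrite h2].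
Qed.

Section CohnAlgebra.
Context (K : fieldType) (V Ed : Type) (r s : Ed -> V) (X : V -> Prop).
Local Notation T := (cterm K V Ed).
Local Notation ceq := (@cohn_eq K V Ed r s X).
Local Notation "x ≈ y" := (@cohn_eq K V Ed r s X x y) (at level 70).
Local Notation "x ⊕ y" := (@cadd K V Ed x y) (at level 50, left associativity).
Local Notation "x ⊗ y" := (@cmul K V Ed x y) (at level 40, left associativity).
Local Notation vert := (@cV K V Ed).
Local Notation edge := (@cE K V Ed).
Local Notation ghost := (@cG K V Ed).
Local Notation zero := (@c0 K V Ed).
Local Infix "+++" := app (at level 60, right associativity).

#[local] Hint Resolve ce_refl : core.
#[local] Instance ceq_equiv : Equivalence ceq.
Proof. split; [exact: ce_refl | exact: ce_sym | exact: ce_trans]. Qed.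
#[local] Instance cadd_proper : Proper (ceq ==> ceq ==> ceq) (@cadd K V Ed).
Proof. by move=> ? ? ? ? ? ?; apply: ce_add. Qed.
#[local] Instance cmul_proper : Proper (ceq ==> ceq ==> ceq) (@cmul K V Ed).
Proof. by move=> ? ? ? ? ? ?; apply: ce_mul. Qed.
#[local] Instance cneg_proper : Proper (ceq ==> ceq) (@cneg K V Ed).
Proof. by move=> ? ? ?; apply: ce_neg. Qed.
#[local] Instance cscal_proper c : Proper (ceq ==> ceq) (@cscal K V Ed c).
Proof. by move=> ? ? ?; apply: ce_scal. Qed.

Lemma caddA (x y z : T) : x ⊕ (y ⊕ z) ≈ x ⊕ y ⊕ z. Proof. exact: ce_addA. Qed.
Lemma caddC (x y : T) : x ⊕ y ≈ y ⊕ x. Proof. exact: ce_addC. Qed.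
Lemma cadd0 (x : T) : zero ⊕ x ≈ x. Proof. exact: ce_add0. Qed.
Lemma caddr0 (x : T) : x ⊕ zero ≈ x. Proof. by rewrite caddC cadd0. Qed.
Lemma caddN (x : T) : cneg x ⊕ x ≈ zero. Proof. exact: ce_addN. Qed.
Lemma caddrN (x : T) : x ⊕ cneg x ≈ zero. Proof. by rewrite caddC caddN. Qed.
Lemma cmulA (x y z : T) : x ⊗ (y ⊗ z) ≈ x ⊗ y ⊗ z. Proof. exact: ce_mulA. Qed.
Lemma cmulDl (x y z : T) : (x ⊕ y) ⊗ z ≈ x ⊗ z ⊕ y ⊗ z. Proof. exact: ce_mulDl. Qed.
Lemma cmulDr (x y z : T) : x ⊗ (y ⊕ z) ≈ x ⊗ y ⊕ x ⊗ z. Proof. exact: ce_mulDr. Qed.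
Lemma cscalDl a b (x : T) : cscal (a + b) x ≈ cscal a x ⊕ cscal b x. Proof. exact: ce_scalDl. Qed.
Lemma cscalDr a (x y : T) : cscal a (x ⊕ y) ≈ cscal a x ⊕ cscal a y. Proof. exact: ce_scalDr. Qed.
Lemma cscalA a b (x : T) : cscal a (cscal b x) ≈ cscal (a * b) x. Proof. by rewrite ce_scalA. Qed.
Lemma cscal1 (x : T) : cscal 1 x ≈ x. Proof. exact: ce_scal1. Qed.
Lemma cscalMl a (x y : T) : cscal a x ⊗ y ≈ cscal a (x ⊗ y). Proof. by rewrite ce_scalMl. Qed.
Lemma cscalMr a (x y : T) : x ⊗ cscal a y ≈ cscal a (x ⊗ y). Proof. by rewrite ce_scalMr. Qed.

Lemma caddI (x y z : T) : x ⊕ y ≈ x ⊕ z -> y ≈ z.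
Proof.
move=> h; transitivity (cneg x ⊕ (x ⊕ y)); first by rewrite caddA caddN cadd0.
by rewrite h caddA caddN cadd0.
Qed.
Lemma cadd_idem (x : T) : x ⊕ x ≈ x -> x ≈ zero.
Proof. by move=> h; apply: (@caddI x); rewrite h caddr0. Qed.
Lemma cneg_unique (x y : T) : x ⊕ y ≈ zero -> y ≈ cneg x.
Proof. by move=> h; apply: (@caddI x); rewrite h caddrN. Qed.
Lemma csubr_eq0 (x y : T) : x ⊕ cneg y ≈ zero -> x ≈ y.
Proof. by move=> h; rewrite -(caddr0 x) -(caddN y) caddA h cadd0. Qed.

Lemma cmul0l (x : T) : zero ⊗ x ≈ zero.
Proof. by apply: cadd_idem; rewrite -cmulDl cadd0. Qed.
Lemma cmul0r (x : T) : x ⊗ zero ≈ zero.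
Proof. by apply: cadd_idem; rewrite -cmulDr cadd0. Qed.
Lemma cscalx0 c : cscal c zero ≈ zero.
Proof. by apply: cadd_idem; rewrite -cscalDr cadd0. Qed.
Lemma cscal0x (x : T) : cscal 0 x ≈ zero.
Proof. by apply: cadd_idem; rewrite -cscalDl addr0. Qed.
Lemma cscalN a (x : T) : cscal (- a) x ≈ cneg (cscal a x).
Proof. by apply: cneg_unique; rewrite -cscalDl subrr cscal0x. Qed.
Lemma cneg0 : cneg zero ≈ zero.
Proof. by symmetry; apply: cneg_unique; rewrite cadd0. Qed.
Lemma cnegD (x y : T) : cneg (x ⊕ y) ≈ cneg x ⊕ cneg y.
Proof.
symmetry; apply: cneg_unique.
by rewrite -caddA (caddC y) -(caddA (cneg x)) caddN caddr0 caddrN.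
Qed.
Lemma cmulNl (x y : T) : cneg x ⊗ y ≈ cneg (x ⊗ y).
Proof. by apply: cneg_unique; rewrite -cmulDl caddrN cmul0l. Qed.
Lemma cmulNr (x y : T) : x ⊗ cneg y ≈ cneg (x ⊗ y).
Proof. by apply: cneg_unique; rewrite -cmulDr caddrN cmul0r. Qed.

Lemma vert_idem v : vert v ⊗ vert v ≈ vert v. Proof. exact: ce_vv. Qed.
Lemma vert_orth v w : v <> w -> vert v ⊗ vert w ≈ zero. Proof. exact: ce_vw. Qed.
Lemma src_edge e : vert (s e) ⊗ edge e ≈ edge e. Proof. exact: ce_se. Qed.
Lemma edge_rng e : edge e ⊗ vert (r e) ≈ edge e. Proof. exact: ce_er. Qed.
Lemma rng_ghost e : vert (r e) ⊗ ghost e ≈ ghost e. Proof. exact: ce_rg. Qed.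
Lemma ghost_src e : ghost e ⊗ vert (s e) ≈ ghost e. Proof. exact: ce_gs. Qed.
Lemma ghost_edge e : ghost e ⊗ edge e ≈ vert (r e). Proof. exact: ce_ge. Qed.
Lemma ghost_edge_ne e f : e <> f -> ghost e ⊗ edge f ≈ zero. Proof. exact: ce_gf. Qed.

Lemma vert_edge_ne u e : u <> s e -> vert u ⊗ edge e ≈ zero.
Proof. by move=> h; rewrite -src_edge cmulA vert_orth // cmul0l. Qed.
Lemma ghost_vert_ne u e : u <> s e -> ghost e ⊗ vert u ≈ zero.
Proof. by move=> h; rewrite -ghost_src -cmulA vert_orth ?cmul0r; auto. Qed.

(** * Paths and monomials *)

(* A path is a list of edges ending at a given vertex [v], the empty list being
   the trivial path at [v]; [rpath a v] is the element [a] and [gpath b v] the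
   element [b^*] of C_K^X(E). *)
Definition path_src (a : list Ed) (v : V) : V :=
  match a with nil => v | e :: _ => s e end.
Fixpoint path_to (a : list Ed) (v : V) : Prop :=
  match a with nil => True | e :: a' => r e = path_src a' v /\ path_to a' v end.
Fixpoint rpath (a : list Ed) (v : V) : T :=
  match a with nil => vert v | e :: a' => edge e ⊗ rpath a' v end.
Fixpoint gpath (b : list Ed) (v : V) : T :=
  match b with nil => vert v | e :: b' => gpath b' v ⊗ ghost e end.

Lemma path_src_rcons a e v : path_src (a +++ [:: e]) v = path_src a (s e).
Proof. by case: a. Qed.
Lemma path_to_rcons a e : path_to a (s e) -> path_to (a +++ [:: e]) (r e).
Proof.
elim: a => [|f a IH] //= [h1 h2].
by split; [rewrite path_src_rcons | exact: IH].
Qed.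
Lemma path_to_cat a b w : path_to (a +++ b) w -> path_to a (path_src b w) /\ path_to b w.
Proof.
elim: a => [|e a IH] //= [h1 h2]; have [h3 h4] := IH h2; do !split=> //.
by rewrite h1; case: a {IH h1 h2 h3}.
Qed.
Lemma path_to_inj a v1 v2 : a <> nil -> path_to a v1 -> path_to a v2 -> v1 = v2.
Proof.
elim: a => [|e a IH] // _; case: a IH => [|f a] IH /= [h1 h2] [h3 h4].
  by rewrite -h1 -h3.
exact: IH.
Qed.

Lemma rpath_vert a v : rpath a v ⊗ vert v ≈ rpath a v.
Proof. elim: a => [|e a IH] /=; [exact: vert_idem | by rewrite -cmulA IH]. Qed.
Lemma vert_rpath a v : vert (path_src a v) ⊗ rpath a v ≈ rpath a v.
Proof. case: a => [|e a] /=; [exact: vert_idem | by rewrite cmulA src_edge]. Qed.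
Lemma vert_rpath_ne a v u : u <> path_src a v -> vert u ⊗ rpath a v ≈ zero.
Proof.
case: a => [|e a] /= h; first exact: vert_orth.
by rewrite cmulA vert_edge_ne // cmul0l.
Qed.
Lemma gpath_vert b v : gpath b v ⊗ vert (path_src b v) ≈ gpath b v.
Proof. case: b => [|e b] /=; [exact: vert_idem | by rewrite -cmulA ghost_src]. Qed.
Lemma gpath_vert_ne b v u : u <> path_src b v -> gpath b v ⊗ vert u ≈ zero.
Proof.
case: b => [|e b] /= h; first by apply: vert_orth; auto.
by rewrite -cmulA ghost_vert_ne // cmul0r.
Qed.
Lemma rpath_edge a e : rpath a (s e) ⊗ edge e ≈ rpath (a +++ [:: e]) (r e).
Proof.
elim: a => [|f a IH] /=; first by rewrite src_edge edge_rng.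
by rewrite -cmulA IH.
Qed.
Lemma gpath_edge b v e : path_to (e :: b) v -> gpath (e :: b) v ⊗ edge e ≈ gpath b v.
Proof. by case=> h _ /=; rewrite -cmulA ghost_edge h gpath_vert. Qed.
Lemma gpath_edge_ne b v e f : f <> e -> gpath (f :: b) v ⊗ edge e ≈ zero.
Proof. by move=> h /=; rewrite -cmulA ghost_edge_ne // cmul0r. Qed.
Lemma gpath_ghost_ne b v e : r e <> path_src b v -> gpath b v ⊗ ghost e ≈ zero.
Proof.
move=> h; rewrite -gpath_vert -rng_ghost -cmulA (cmulA (vert _)) vert_orth; last by auto.
by rewrite cmul0l cmul0r.
Qed.

(* The monomial [a b^*], with [a] and [b] paths ending at the vertex [mvert]. *)
Record monomial := Monomial { mreal : list Ed; mghost : list Ed; mvert : V }.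
Definition mono_val (m : monomial) : T := rpath (mreal m) (mvert m) ⊗ gpath (mghost m) (mvert m).
Definition mono_valid (m : monomial) := path_to (mreal m) (mvert m) /\ path_to (mghost m) (mvert m).
Definition mono_rvert (m : monomial) := path_src (mghost m) (mvert m).
Definition omono_val (om : option monomial) : T := if om is Some m then mono_val m else zero.
Definition oprop (P : monomial -> Prop) (om : option monomial) := if om is Some m then P m else True.

Lemma mono_val_vert m : mono_val m ⊗ vert (mono_rvert m) ≈ mono_val m.
Proof. by rewrite /mono_val -cmulA gpath_vert. Qed.
Lemma mono_val_vert_ne m u : u <> mono_rvert m -> mono_val m ⊗ vert u ≈ zero.
Proof. by move=> h; rewrite /mono_val -cmulA gpath_vert_ne // cmul0r. Qed.
Lemma mono_edge_nil a e :
  mono_val (Monomial a nil (s e)) ⊗ edge e ≈ mono_val (Monomial (a +++ [:: e]) nil (r e)).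
Proof. by rewrite /mono_val /= -cmulA src_edge rpath_vert rpath_edge. Qed.
Lemma mono_edge_nil_ne a v e : v <> s e -> mono_val (Monomial a nil v) ⊗ edge e ≈ zero.
Proof. by move=> h; rewrite /mono_val /= -cmulA vert_edge_ne // cmul0r. Qed.
Lemma mono_edge_cons a b v e : path_to (e :: b) v ->
  mono_val (Monomial a (e :: b) v) ⊗ edge e ≈ mono_val (Monomial a b v).
Proof. by move=> h; rewrite /mono_val /= -cmulA -/(gpath (e :: b) v) gpath_edge. Qed.
Lemma mono_edge_cons_ne a b v e f : f <> e -> mono_val (Monomial a (f :: b) v) ⊗ edge e ≈ zero.
Proof. by move=> h; rewrite /mono_val /= -cmulA -/(gpath (f :: b) v) gpath_edge_ne // cmul0r. Qed.
Lemma mono_ghost a b v e : mono_val (Monomial a b v) ⊗ ghost e ≈ mono_val (Monomial a (e :: b) v).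
Proof. by rewrite /mono_val /= -cmulA. Qed.
Lemma mono_ghost_ne a b v e : r e <> path_src b v -> mono_val (Monomial a b v) ⊗ ghost e ≈ zero.
Proof. by move=> h; rewrite /mono_val /= -cmulA gpath_ghost_ne // cmul0r. Qed.

Lemma mono_mul_vert m u :
  exists om, mono_val m ⊗ vert u ≈ omono_val om /\ (mono_valid m -> oprop mono_valid om).
Proof.
case: (classic (u = mono_rvert m)) => [->|h]; first by exists (Some m); split=> //; exact: mono_val_vert.
by exists None; split=> //; exact: mono_val_vert_ne.
Qed.
Lemma mono_mul_edge m e : mono_valid m -> exists om, mono_val m ⊗ edge e ≈ omono_val om /\
  oprop (fun m' => mono_valid m' /\ mono_rvert m' = r e /\
                   (length (mghost m') <= length (mghost m) - 1)%coq_nat) om.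
Proof.
case: m => a [|f b] v [/= ha hb].
  case: (classic (v = s e)) => [hv|h]; last by exists None; split=> //; exact: mono_edge_nil_ne.
  subst v.
  exists (Some (Monomial (a +++ [:: e]) nil (r e))); split; first exact: mono_edge_nil.
  by do !split=> //; apply: path_to_rcons.
case: (classic (f = e)) => [<-|h]; last by exists None; split=> //; exact: mono_edge_cons_ne.
exists (Some (Monomial a b v)); split; first exact: mono_edge_cons.
by case: hb => hr hb; do !split=> //=; lia.
Qed.
Lemma mono_mul_ghost m e : mono_valid m ->
  exists om, mono_val m ⊗ ghost e ≈ omono_val om /\ oprop mono_valid om.
Proof.
case: m => a b v [ha hb].
case: (classic (r e = path_src b v)) => h; last by exists None; split=> //; exact: mono_ghost_ne.
by exists (Some (Monomial a (e :: b) v)); split; [exact: mono_ghost | split].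
Qed.

Lemma omono_mul_rpath om a u : oprop mono_valid om ->
  exists om', omono_val om ⊗ rpath a u ≈ omono_val om' /\ oprop mono_valid om'.
Proof.
elim: a om => [|e a IH] [m|] hv /=; try by exists None; split=> //; exact: cmul0l.
  by have [om [h1 h2]] := mono_mul_vert m u; exists om; split=> //; apply: h2.
have [om [h1 h2]] := mono_mul_edge e hv.
have [om' [h3 h4]] : exists om', omono_val om ⊗ rpath a u ≈ omono_val om' /\ oprop mono_valid om'.
  by apply: IH; case: om h2 {h1} => [? []|].
by exists om'; split=> //; rewrite cmulA h1 h3.
Qed.
Lemma omono_mul_gpath om b u : oprop mono_valid om ->
  exists om', omono_val om ⊗ gpath b u ≈ omono_val om' /\ oprop mono_valid om'.
Proof.
elim: b om => [|e b IH] om hv /=.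
  case: om hv => [m|] hv /=; last by exists None; split=> //; exact: cmul0l.
  by have [om [h1 h2]] := mono_mul_vert m u; exists om; split=> //; apply: h2.
have [[m|] [h1 h2]] := IH om hv; last by exists None; split=> //; rewrite cmulA h1 /= cmul0l.
have [om2 [h3 h4]] := mono_mul_ghost e h2.
by exists om2; split=> //; rewrite cmulA h1 /= h3.
Qed.
Lemma mono_mul m1 m2 : mono_valid m1 ->
  exists om, mono_val m1 ⊗ mono_val m2 ≈ omono_val om /\ oprop mono_valid om.
Proof.
move=> hv; have [om [h1 h2]] := @omono_mul_rpath (Some m1) (mreal m2) (mvert m2) hv.
have [om' [h3 h4]] := omono_mul_gpath (mghost m2) (mvert m2) h2.
by exists om'; split=> //; rewrite /mono_val cmulA -/(mono_val m1) -/(omono_val (Some m1)) h1 h3.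
Qed.

(** * Normal form *)

Fixpoint wsum (A : Type) (f : A -> T) (L : list (K * A)) : T :=
  match L with nil => zero | (k, a) :: L' => cscal k (f a) ⊕ wsum f L' end.

Lemma wsum_cat A (f : A -> T) L1 L2 : wsum f (L1 +++ L2) ≈ wsum f L1 ⊕ wsum f L2.
Proof. by elim: L1 => [|[k a] L1 IH] /=; rewrite ?cadd0 // IH caddA. Qed.
Lemma wsum_mulr A (f : A -> T) L y : wsum f L ⊗ y ≈ wsum (fun a => f a ⊗ y) L.
Proof. by elim: L => [|[k a] L IH] /=; rewrite ?cmul0l // cmulDl IH cscalMl. Qed.
Lemma wsum_mull A (f : A -> T) L y : y ⊗ wsum f L ≈ wsum (fun a => y ⊗ f a) L.
Proof. by elim: L => [|[k a] L IH] /=; rewrite ?cmul0r // cmulDr IH cscalMr. Qed.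
Lemma eq_wsum A (f g : A -> T) L :
  (forall k a, In (k, a) L -> f a ≈ g a) -> wsum f L ≈ wsum g L.
Proof.
elim: L => [|[k a] L IH] //= h.
by rewrite (h k a) ?IH //; [move=> k' a' hi; apply: (h k'); right | left].
Qed.
Lemma wsum_eq0 A (f : A -> T) L : (forall k a, In (k, a) L -> f a ≈ zero) -> wsum f L ≈ zero.
Proof.
elim: L => [|[k a] L IH] //= h.
by rewrite (h k a (or_introl erefl)) cscalx0 cadd0 IH // => k' a' hi; apply: (h k'); right.
Qed.
Lemma wsum_neg A (f : A -> T) L :
  cneg (wsum f L) ≈ wsum f (List.map (fun ka => (- ka.1, ka.2)) L).
Proof. by elim: L => [|[k a] L IH] /=; rewrite ?cneg0 // cnegD IH cscalN. Qed.
Lemma wsum_scal A (f : A -> T) c L :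
  cscal c (wsum f L) ≈ wsum f (List.map (fun ka => (c * ka.1, ka.2)) L).
Proof. by elim: L => [|[k a] L IH] /=; rewrite ?cscalx0 // cscalDr IH cscalA. Qed.

Lemma wsum_rewrite A B (F : A -> T) (g : B -> T) (Q : B -> Prop) (L : list (K * A)) :
  (forall k a, In (k, a) L -> exists Lb, cscal k (F a) ≈ wsum g Lb /\
       (forall x, In x Lb -> Q x.2) /\ (length Lb <= 1)%coq_nat) ->
  exists L', wsum F L ≈ wsum g L' /\ (forall x, In x L' -> Q x.2) /\
       (length L' <= length L)%coq_nat.
Proof.
elim: L => [|[k a] L IH] h /=; first by exists nil; split; [|split=> //; lia].
have [Lb [h1 [h2 h3]]] := h k a (or_introl erefl).
have [L' [h4 [h5 h6]]] := IH (fun k' a' hi => h k' a' (or_intror hi)).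
exists (Lb +++ L'); split; first by rewrite wsum_cat h1 h4.
split; last by rewrite List.length_app; lia.
by move=> x /(@in_app_or _ _ _ x) [] hx; [apply: h2 | apply: h5].
Qed.

Lemma wsum_partition A (f : A -> T) (P : A -> Prop) L : exists LA LB,
  wsum f L ≈ wsum f LA ⊕ wsum f LB /\
  (forall x, In x LA -> In x L /\ P x.2) /\ (forall x, In x LB -> In x L /\ ~ P x.2) /\
  (length LA + length LB)%coq_nat = length L /\ (forall x, In x L -> P x.2 -> In x LA).
Proof.
elim: L => [|[k a] L [LA [LB [h1 [h2 [h3 [h4 h5]]]]]]] /=.
  by exists nil, nil; split; [rewrite cadd0 | split=> //].
have inL x : In x L -> In x ((k, a) :: L) by right.
case: (classic (P a)) => hP.
  exists ((k, a) :: LA), LB; split; first by rewrite /= h1 caddA.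
  split; first by move=> x [<-|/h2 [? ?]]; [split=> //; left | split=> //; right].
  split; first by move=> x /h3 [? ?]; split=> //; right.
  split; first by rewrite /= -h4.
  by move=> x [<-|hx] hp; [left | right; apply: h5].
exists LA, ((k, a) :: LB); split.
  by rewrite /= h1 caddA (caddC (cscal k (f a))) -caddA.
split; first by move=> x /h2 [? ?]; split=> //; right.
split; first by move=> x [<-|/h3 [? ?]]; [split=> //; left | split=> //; right].
split; first by rewrite /= -h4; lia.
by move=> x [<-|hx] hp //; apply: h5.
Qed.

Definition mono_valid_list (L : list (K * monomial)) := forall x, In x L -> mono_valid x.2.
Definition msum := wsum mono_val.

Lemma omono_val_scal (P : monomial -> Prop) k om : oprop P om -> exists Lb,
  cscal k (omono_val om) ≈ msum Lb /\ (forall x, In x Lb -> P x.2) /\ (length Lb <= 1)%coq_nat.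
Proof.
case: om => [m|] /= hP; last by exists nil; split; [exact: cscalx0 | split=> //=; lia].
by exists [:: (k, m)]; split; [rewrite /msum /= caddr0 | split=> [x [<-|]|] //=].
Qed.

Lemma msum_mul L1 L2 : mono_valid_list L1 ->
  exists L, msum L1 ⊗ msum L2 ≈ msum L /\ mono_valid_list L.
Proof.
elim: L1 => [|[k1 m1] L1 IH] h1 /=.
  by exists nil; split; [exact: cmul0l | move=> ? []].
have term k m : exists Lb, cscal k (cscal k1 (mono_val m1) ⊗ mono_val m) ≈ msum Lb /\
    (forall x, In x Lb -> mono_valid x.2) /\ (length Lb <= 1)%coq_nat.
  have [om [o1 o2]] := mono_mul m (h1 _ (or_introl erefl)).
  have [Lb [b1 b2]] := omono_val_scal (k * k1) o2.
  by exists Lb; split=> //; rewrite cscalMl cscalA o1 b1.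
have [La [ha [hva _]]] := @wsum_rewrite _ _ (fun m => cscal k1 (mono_val m1) ⊗ mono_val m)
  mono_val mono_valid L2 (fun k m _ => term k m).
have [Lb [hb hvb]] := IH (fun x hx => h1 x (or_intror hx)).
exists (La +++ Lb); split.
  by rewrite /msum /= wsum_cat cmulDl -ha wsum_mull; apply: ce_add.
by move=> x /(@in_app_or _ _ _ x) [] hx; [apply: hva | apply: hvb].
Qed.

Lemma msum1 m : msum [:: (1, m)] ≈ mono_val m.
Proof. by rewrite /msum /= caddr0 cscal1. Qed.

Lemma normal_form (x : T) : exists L, x ≈ msum L /\ mono_valid_list L.
Proof.
have single m : mono_valid m -> exists L, mono_val m ≈ msum L /\ mono_valid_list L.
  by move=> hm; exists [:: (1, m)]; split; [rewrite msum1 | move=> ? [<-|]].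
elim: x => [v|e|e| |x [L1 [e1 v1]] y [L2 [e2 v2]] |x [L1 [e1 v1]]
            |x [L1 [e1 v1]] y [L2 [e2 v2]]|c x [L1 [e1 v1]]].
- have [L [h hv]] := single (Monomial nil nil v) (conj I I).
  by exists L; split=> //; rewrite -h /mono_val /= vert_idem.
- have [L [h hv]] := single (Monomial [:: e] nil (r e)) (conj (conj erefl I) I).
  by exists L; split=> //; rewrite -h /mono_val /= !edge_rng.
- have [L [h hv]] := single (Monomial nil [:: e] (r e)) (conj I (conj erefl I)).
  by exists L; split=> //; rewrite -h /mono_val /= !rng_ghost.
- by exists nil; split=> // ? [].
- exists (L1 +++ L2); split; first by rewrite /msum wsum_cat -/msum -e1 -e2.
  by move=> z /(@in_app_or _ _ _ z) [] hz; [apply: v1 | apply: v2].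
- exists (List.map (fun ka => (- ka.1, ka.2)) L1); split; first by rewrite e1 /msum wsum_neg.
  by move=> z /in_map_iff [[k m] [<- hi]]; apply: (v1 _ hi).
- have [L [h hv]] := msum_mul L2 v1; exists L; split=> //; by rewrite e1 e2.
- exists (List.map (fun ka => (c * ka.1, ka.2)) L1); split; first by rewrite e1 /msum wsum_scal.
  by move=> z /in_map_iff [[k m] [<- hi]]; apply: (v1 _ hi).
Qed.

(** * The gap idempotent *)

Lemma sumEE_mulr_eq0 l y : (forall e, In e l -> y ⊗ edge e ≈ zero) -> y ⊗ sumEE K V l ≈ zero.
Proof.
elim: l => [|e l IH] h /=; first exact: cmul0r.
by rewrite cmulDr cmulA h ?cmul0l ?cadd0 ?IH // => [f hf|]; [apply: h; right | left].
Qed.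
Lemma sumEE_edge_notin l f : ~ In f l -> sumEE K V l ⊗ edge f ≈ zero.
Proof.
elim: l => [|e l IH] h /=; first exact: cmul0l.
rewrite cmulDl -cmulA ghost_edge_ne => [|ef]; last by apply: h; left.
by rewrite cmul0r cadd0 IH // => hf; apply: h; right.
Qed.
Lemma sumEE_edge l f : NoDup l -> In f l -> sumEE K V l ⊗ edge f ≈ edge f.
Proof.
elim: l => [|e l IH] hn //= hf; inversion hn as [|? ? hnin hnd]; subst.
rewrite cmulDl -cmulA; case: hf => [<-|hf].
  by rewrite ghost_edge edge_rng sumEE_edge_notin // caddr0.
rewrite ghost_edge_ne => [|ef]; last by subst.
by rewrite cmul0r cadd0 IH.
Qed.
Lemma ghost_sumEE_notin l f : ~ In f l -> ghost f ⊗ sumEE K V l ≈ zero.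
Proof.
elim: l => [|e l IH] h /=; first exact: cmul0r.
rewrite cmulDr cmulA ghost_edge_ne => [|ef]; last by apply: h; left.
by rewrite cmul0l cadd0 IH // => hf; apply: h; right.
Qed.
Lemma ghost_sumEE l f : NoDup l -> In f l -> ghost f ⊗ sumEE K V l ≈ ghost f.
Proof.
elim: l => [|e l IH] hn //= hf; inversion hn as [|? ? hnin hnd]; subst.
rewrite cmulDr cmulA; case: hf => [<-|hf].
  by rewrite ghost_edge rng_ghost ghost_sumEE_notin // caddr0.
rewrite ghost_edge_ne => [|ef]; last by subst.
by rewrite cmul0l cadd0 IH.
Qed.
Lemma vert_sumEE v l : (forall e, In e l -> s e = v) -> vert v ⊗ sumEE K V l ≈ sumEE K V l.
Proof.
elim: l => [|e l IH] h /=; first exact: cmul0r.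
have he : vert v ⊗ edge e ≈ edge e by rewrite -(h e (or_introl erefl)) src_edge.
by rewrite cmulDr cmulA he IH // => f hf; apply: h; right.
Qed.
Lemma sumEE_vert v l : (forall e, In e l -> s e = v) -> sumEE K V l ⊗ vert v ≈ sumEE K V l.
Proof.
elim: l => [|e l IH] h /=; first exact: cmul0l.
have he : ghost e ⊗ vert v ≈ ghost e by rewrite -(h e (or_introl erefl)) ghost_src.
by rewrite cmulDl -cmulA he IH // => f hf; apply: h; right.
Qed.

Definition qvert v l := vert v ⊕ cneg (sumEE K V l).

Section GapIdempotent.
Variables (v : V) (l : list Ed).
Hypothesis (hen : enumerates s v l).

Let src_l e : In e l -> s e = v. Proof. by case: hen => _ hin /hin. Qed.

Lemma vert_decomp : vert v ≈ qvert v l ⊕ sumEE K V l.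
Proof. by rewrite /qvert -caddA caddN caddr0. Qed.
Lemma qvert_edge f : s f = v -> qvert v l ⊗ edge f ≈ zero.
Proof.
case: hen => hnd hin hf.
by rewrite /qvert cmulDl cmulNl sumEE_edge // ?hin // -hf src_edge caddrN.
Qed.
Lemma ghost_qvert f : s f = v -> ghost f ⊗ qvert v l ≈ zero.
Proof.
case: hen => hnd hin hf.
by rewrite /qvert cmulDr cmulNr ghost_sumEE // ?hin // -hf ghost_src caddrN.
Qed.
Lemma vert_qvert : vert v ⊗ qvert v l ≈ qvert v l.
Proof. by rewrite /qvert cmulDr cmulNr vert_idem vert_sumEE. Qed.
Lemma qvert_vert : qvert v l ⊗ vert v ≈ qvert v l.
Proof. by rewrite /qvert cmulDl cmulNl vert_idem sumEE_vert. Qed.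
Lemma qvert_idem : qvert v l ⊗ qvert v l ≈ qvert v l.
Proof.
have qE : qvert v l ⊗ sumEE K V l ≈ zero.
  by apply: sumEE_mulr_eq0 => e /src_l; apply: qvert_edge.
by rewrite {2}/qvert cmulDr cmulNr qE cneg0 caddr0 qvert_vert.
Qed.
Lemma qvert_rpath a : a <> nil -> path_src a v = v -> qvert v l ⊗ rpath a v ≈ zero.
Proof. by case: a => [|f a] //= _ hf; rewrite cmulA qvert_edge // cmul0l. Qed.
End GapIdempotent.

(** * Loop sums *)

Definition rsum w := wsum (fun a => rpath a w).
Definition closed_path u g := g <> nil /\ path_to g u /\ path_src g u = u.
Definition closed_list u (C : list (K * list Ed)) := forall x, In x C -> closed_path u x.2.
Definition loop_sum u c C := cscal c (vert u) ⊕ rsum u C.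

Lemma closed_path_rotate e rho :
  closed_path (s e) (e :: rho) -> closed_path (r e) (rho +++ [:: e]).
Proof.
case=> _ [[hr hv] _]; split; first by case: rho {hr hv}.
by split; [exact: path_to_rcons | rewrite path_src_rcons].
Qed.

Definition conj_edge e x := ghost e ⊗ x ⊗ edge e.

Lemma conj_edgeD e x y : conj_edge e (x ⊕ y) ≈ conj_edge e x ⊕ conj_edge e y.
Proof. by rewrite /conj_edge cmulDr cmulDl. Qed.
Lemma conj_edgeZ e k x : conj_edge e (cscal k x) ≈ cscal k (conj_edge e x).
Proof. by rewrite /conj_edge cscalMr cscalMl. Qed.
Lemma conj_edge_vert e : conj_edge e (vert (s e)) ≈ vert (r e).
Proof. by rewrite /conj_edge ghost_src ghost_edge. Qed.
Lemma conj_edge_rpath e rho : path_to (e :: rho) (s e) ->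
  conj_edge e (rpath (e :: rho) (s e)) ≈ rpath (rho +++ [:: e]) (r e).
Proof. by case=> hr _; rewrite /conj_edge /= cmulA ghost_edge {1}hr vert_rpath rpath_edge. Qed.
Lemma conj_edge_rpath_ne e f rho u : f <> e -> conj_edge e (rpath (f :: rho) u) ≈ zero.
Proof. by move=> h; rewrite /conj_edge /= cmulA ghost_edge_ne ?cmul0l; auto. Qed.

Lemma conj_edge_rsum e C : closed_list (s e) C -> exists C',
  conj_edge e (rsum (s e) C) ≈ rsum (r e) C' /\ closed_list (r e) C' /\
  (length C' <= length C)%coq_nat.
Proof.
move=> hC.
have term k a : In (k, a) C -> exists Lb,
    cscal k (conj_edge e (rpath a (s e))) ≈ rsum (r e) Lb /\
    (forall x, In x Lb -> closed_path (r e) x.2) /\ (length Lb <= 1)%coq_nat.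
  move=> /hC /= hcl; case: a hcl => [|f rho] hcl; first by case: hcl.
  case: (classic (f = e)) => [hfe|hne]; first subst f.
    exists [:: (k, rho +++ [:: e])]; split.
      by rewrite conj_edge_rpath /rsum /= ?caddr0 //; case: hcl => _ [].
    by split=> [x [<-|] //|/=]; [exact: closed_path_rotate | lia].
  by exists nil; split=> /=; [rewrite conj_edge_rpath_ne // cscalx0 | split=> //; lia].
have [C' [h1 h2]] := wsum_rewrite term.
by exists C'; split=> //; rewrite /conj_edge /rsum wsum_mull wsum_mulr -h1.
Qed.

Lemma conj_edge_loop_sum_rotate e c k rho C :
  closed_list (s e) ((k, e :: rho) :: C) -> exists C',
  conj_edge e (loop_sum (s e) c ((k, e :: rho) :: C)) ≈ loop_sum (r e) c ((k, rho +++ [:: e]) :: C') /\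
  closed_list (r e) ((k, rho +++ [:: e]) :: C') /\ (length C' <= length C)%coq_nat.
Proof.
move=> hC; have hcl := hC _ (or_introl erefl).
have [C' [h1 [h2 h3]]] := conj_edge_rsum (fun x hx => hC x (or_intror hx)).
exists C'; split; last by split=> // x [<-|hx]; [exact: closed_path_rotate | exact: h2].
rewrite /loop_sum /rsum /= -/(rsum (s e) C) -/(rsum (r e) C') !conj_edgeD !conj_edgeZ.
by rewrite conj_edge_vert conj_edge_rpath ?h1 //; case: hcl => _ [].
Qed.
Lemma conj_edge_loop_sum_drop e f c k rho C : f <> e ->
  closed_list (s e) ((k, f :: rho) :: C) -> exists C',
  conj_edge e (loop_sum (s e) c ((k, f :: rho) :: C)) ≈ loop_sum (r e) c C' /\
  closed_list (r e) C' /\ (length C' <= length C)%coq_nat.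
Proof.
move=> hne hC.
have [C' [h1 [h2 h3]]] := conj_edge_rsum (fun x hx => hC x (or_intror hx)).
exists C'; split=> //.
rewrite /loop_sum /rsum /= -/(rsum (s e) C) !conj_edgeD !conj_edgeZ.
by rewrite conj_edge_vert conj_edge_rpath_ne // cscalx0 cadd0 h1.
Qed.

Lemma path_to_is_path g u : path_to g u -> is_path r s g.
Proof. by elim: g => [|e [|f g] IH] //= [h1 h2]; split=> //; apply: IH. Qed.
Lemma path_to_last g u d : g <> nil -> path_to g u -> r (List.last g d) = u.
Proof.
elim: g => [|e g IH] // _ /=; case: g IH => [|f g] IH /= [h1 h2] //.
exact: IH.
Qed.
Lemma is_path_catl a b : is_path r s (a +++ b) -> is_path r s a.
Proof. by elim: a => [|e [|f a] IH] //= [h1 h2]; split=> //; apply: IH. Qed.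
Lemma is_path_catr a b : is_path r s (a +++ b) -> is_path r s b.
Proof.
elim: a => [|e a IH] // h; apply: IH.
by move: h => /=; case: (a +++ b) => [|f l] //= [].
Qed.
Lemma is_path_junction a y c d :
  a <> nil -> is_path r s (a +++ y :: c) -> r (List.last a d) = s y.
Proof.
elim: a => [|e a IH] // _ /=; case: a IH => [|f a] IH /= [h1 h2] //.
exact: IH.
Qed.

Lemma not_NoDup_map_split g : ~ NoDup (List.map s g) ->
  exists a x b y c, g = a +++ x :: b +++ y :: c /\ s x = s y.
Proof.
elim: g => [|e g IH] /= h; first by case: h; constructor.
case: (classic (In (s e) (List.map s g))) => [/in_map_iff [y [hy1 hy2]]|hin].
  have [b [c hbc]] := in_split _ _ hy2.
  by exists nil, e, b, y, c; rewrite hbc.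
have [|a [x [b [y [c [h1 h2]]]]]] := IH; first by move=> hnd; apply: h; constructor.
by exists (e :: a), x, b, y, c; rewrite h1.
Qed.

(* A closed path repeating a vertex contains a shorter closed path, namely the
   portion between two edges with the same source. *)
Lemma closed_is_path_cycle g : forall e1, is_path r s (e1 :: g) ->
  r (List.last (e1 :: g) e1) = s e1 -> exists p, is_cycle r s p /\ incl p (e1 :: g).
Proof.
elim/(measure_ind (f := @length Ed)): g => g IH e1 hp hc.
case: (classic (NoDup (List.map s (e1 :: g)))) => hnd; first by exists (e1 :: g); do !split.
have [a [x [b [y [c [h1 h2]]]]]] := not_NoDup_map_split hnd.
have hyc : is_path r s (x :: b +++ y :: c) by apply: (@is_path_catr a); rewrite -h1.
have hlen : (length b < length g)%coq_nat.
  by have := congr1 (@length Ed) h1; rewrite List.length_app /= List.length_app /=; lia.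
have [|//|p [hp1 hp2]] := IH b hlen x; first exact: (@is_path_catl (x :: b) (y :: c)).
  by rewrite h2; apply: (@is_path_junction (x :: b) y c).
exists p; split=> // z /hp2 hz; rewrite h1; apply: in_or_app; right.
by case: hz => [<-|hz]; [left | right; apply: in_or_app; left].
Qed.

Lemma gpath_rpath_self a w : path_to a w -> gpath a w ⊗ rpath a w ≈ vert w.
Proof.
elim: a => [|e a IH] /=; first by rewrite vert_idem.
by case=> hr ha; rewrite -cmulA (cmulA (ghost e)) ghost_edge hr vert_rpath IH.
Qed.

Lemma gpath_rpath w b : forall g, path_to b w -> path_to g w ->
  path_src b w = path_src g w -> (length b <= length g)%coq_nat ->
  (exists d, g = b +++ d /\ gpath b w ⊗ rpath g w ≈ rpath d w) \/
  ((forall d, g <> b +++ d) /\ gpath b w ⊗ rpath g w ≈ zero).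
Proof.
elim: b => [|e b IH] g hb hg hst hl.
  by left; exists g; split=> //=; move: hst => /= hst; rewrite {1}hst vert_rpath.
case: g hg hst hl => [|f g] hg hst hl; first by move: hl => /=; lia.
have eqm : gpath (e :: b) w ⊗ rpath (f :: g) w ≈ gpath b w ⊗ (ghost e ⊗ edge f) ⊗ rpath g w.
  by rewrite /= !cmulA.
case: (classic (e = f)) => [hef|hef]; last first.
  right; split=> [d [hd _] //|]; first by apply: hef.
  by rewrite eqm ghost_edge_ne // cmul0r cmul0l.
subst f; have [hb1 hb2] := hb; have [hg1 hg2] := hg.
have eqm' : gpath (e :: b) w ⊗ rpath (e :: g) w ≈ gpath b w ⊗ rpath g w.
  by rewrite eqm ghost_edge hb1 gpath_vert.
have hs : path_src b w = path_src g w by rewrite -hb1 -hg1.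
have hl' : (length b <= length g)%coq_nat by move: hl => /=; lia.
case: (IH g hb2 hg2 hs hl') => [[d [hd h2]]|[h1 h2]].
  by left; exists d; split; [rewrite hd | rewrite eqm' h2].
by right; split=> [d [hd]|]; [apply: (h1 d) | rewrite eqm' h2].
Qed.

Lemma gpath_rpath_closed w b g k : path_to b w -> path_to g w ->
  path_src b w = path_src g w -> (length b <= length g)%coq_nat -> g <> b ->
  exists C, cscal k (gpath b w ⊗ rpath g w) ≈ rsum w C /\ closed_list w C /\
            (length C <= 1)%coq_nat.
Proof.
move=> hb hg hst hl hgb.
have [[d [hd e]]|[_ e]] := gpath_rpath hb hg hst hl; last first.
  by exists nil; split; [rewrite e cscalx0 | split=> //=; lia].
case: d hd e => [|f d] hd e; first by exfalso; apply: hgb; rewrite hd app_nil_r.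
have [hb' hd'] : path_to b (path_src (f :: d) w) /\ path_to (f :: d) w.
  by apply: path_to_cat; rewrite -hd.
have hcl : closed_path w (f :: d).
  split=> //; split=> //; case: (classic (b = nil)) => [hb0|hb0].
    by move: hst; rewrite hd hb0.
  exact: (path_to_inj hb0 hb' hb).
exists [:: (k, f :: d)]; split; first by rewrite e /rsum /= caddr0.
by split=> [x [<-|] //|/=]; lia.
Qed.

Lemma gpath_rsum_closed w b L : path_to b w ->
  (forall x, In x L -> path_to x.2 w /\ path_src x.2 w = path_src b w /\
                       (length b <= length x.2)%coq_nat /\ x.2 <> b) ->
  exists C, gpath b w ⊗ rsum w L ≈ rsum w C /\ closed_list w C.
Proof.
move=> hb hL.
have term k g : In (k, g) L -> exists C, cscal k (gpath b w ⊗ rpath g w) ≈ rsum w C /\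
    closed_list w C /\ (length C <= 1)%coq_nat.
  by move=> /hL /= [hg [hs [hl hgb]]]; apply: gpath_rpath_closed.
have [C [h1 [h2 _]]] := wsum_rewrite term.
by exists C; split=> //; rewrite /rsum wsum_mull.
Qed.

Lemma wsum_const A (f : A -> T) L a : (forall x, In x L -> x.2 = a) ->
  exists c, wsum f L ≈ cscal c (f a).
Proof.
elim: L => [|[k a'] L IH] h /=; first by exists 0; rewrite cscal0x.
have [c hc] := IH (fun x hx => h x (or_intror hx)).
exists (k + c); rewrite hc cscalDl.
by have /= -> := h _ (or_introl erefl).
Qed.

Lemma msum_real w L : (forall x, In x L ->
    mghost x.2 = nil /\ mvert x.2 = w /\ path_to (mreal x.2) w) ->
  exists R, msum L ≈ rsum w R /\ (forall y, In y R -> path_to y.2 w).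
Proof.
elim: L => [|[k [a b v]] L IH] h; first by exists nil.
have [R [h1 h2]] := IH (fun x hx => h x (or_intror hx)).
have /= [hb [hv hp]] := h _ (or_introl erefl); subst b v.
exists ((k, a) :: R); split; last by move=> y [<-|hy]; [exact: hp | exact: h2].
by rewrite /msum /= -/(msum L) h1 /mono_val /= rpath_vert.
Qed.

Lemma msum_mul_edge n e L : mono_valid_list L ->
  (forall x, In x L -> (length (mghost x.2) <= n.+1)%coq_nat) ->
  exists L', msum L ⊗ edge e ≈ msum L' /\ mono_valid_list L' /\
  (forall x, In x L' -> mono_rvert x.2 = r e /\ (length (mghost x.2) <= n)%coq_nat).
Proof.
move=> hv hL.
have term k m : In (k, m) L -> exists Lb, cscal k (mono_val m ⊗ edge e) ≈ msum Lb /\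
    (forall x, In x Lb -> mono_valid x.2 /\ mono_rvert x.2 = r e /\
                          (length (mghost x.2) <= n)%coq_nat) /\ (length Lb <= 1)%coq_nat.
  move=> hm; have [om [h1 h2]] := mono_mul_edge e (hv _ hm).
  have hP : oprop (fun m' => mono_valid m' /\ mono_rvert m' = r e /\
                             (length (mghost m') <= n)%coq_nat) om.
    by case: om h2 {h1} => [m' [? [? ?]]|] //; do !split=> //; have := hL _ hm; lia.
  by have [Lb [h3 h4]] := omono_val_scal k hP; exists Lb; rewrite h1.
have [L' [h1 [h2 _]]] := @wsum_rewrite _ _ _ mono_val (fun m => mono_valid m /\
  mono_rvert m = r e /\ (length (mghost m) <= n)%coq_nat) L term.
exists L'; split; first by rewrite /msum wsum_mulr.
by split=> x hx; have [? ?] := h2 x hx.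
Qed.

Lemma ghost_length_bound (L : list (K * monomial)) :
  exists n, forall x, In x L -> (length (mghost x.2) <= n)%coq_nat.
Proof.
elim: L => [|[k m] L [n hn]]; first by exists 0%N.
exists (n + length (mghost m))%coq_nat => x [<-|/hn] /=; lia.
Qed.

Lemma msum_first_ghost f L : mono_valid_list L ->
  (forall x, In x L -> exists b, mghost x.2 = f :: b) ->
  msum L ⊗ edge f ⊗ ghost f ≈ msum L.
Proof.
move=> hv hL; rewrite /msum !wsum_mulr; apply: eq_wsum => k [a b v] hm.
have /= [b' hb'] := hL _ hm; subst b.
by have [_ hvb] := hv _ hm; rewrite mono_edge_cons // mono_ghost.
Qed.
Lemma msum_first_ghost_ne f L :
  (forall x, In x L -> exists g b, mghost x.2 = g :: b /\ g <> f) -> msum L ⊗ edge f ≈ zero.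
Proof.
move=> hL; rewrite /msum wsum_mulr; apply: wsum_eq0 => k [a b v] hm.
by have /= [g [b' [-> hg]]] := hL _ hm; apply: mono_edge_cons_ne.
Qed.

(* Split by the first ghost edge [f]: each part [x_f] satisfies [x_f = x f f^*]. *)
Lemma msum_ghost_eq0 w L : mono_valid_list L ->
  (forall x, In x L -> mono_rvert x.2 = w /\ mghost x.2 <> nil) ->
  (forall e, s e = w -> msum L ⊗ edge e ≈ zero) -> msum L ≈ zero.
Proof.
elim/(measure_ind (f := @length (K * monomial))): L => L IH hv hL hE.
case: L IH hv hL hE => [|[k m] L0] IH hv hL hE //.
set L := (k, m) :: L0 in IH hv hL hE *.
have [hrm] := hL _ (or_introl erefl); case hmb : (mghost m) => [|f b0] // _.
have hsf : s f = w by rewrite -hrm /mono_rvert hmb.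
have [LA [LB [h1 [h2 [h3 [h4 h5]]]]]] :=
  @wsum_partition _ mono_val (fun m' => exists b', mghost m' = f :: b') L.
have hA : msum LA ≈ zero.
  have eB : msum LB ⊗ edge f ≈ zero.
    apply: msum_first_ghost_ne => x /h3 [/hL [_ hne] hx].
    case hx2 : (mghost x.2) hne => [|g b] // _; exists g, b; split=> // hgf.
    by apply: hx; exists b; rewrite hx2 hgf.
  have eA : msum LA ⊗ edge f ⊗ ghost f ≈ msum LA.
    by apply: msum_first_ghost => [x /h2 [/hv]|x /h2 []].
  rewrite -eA.
  have -> : msum LA ⊗ edge f ≈ msum L ⊗ edge f.
    by rewrite /msum h1 cmulDl -/(msum LB) eB caddr0.
  by rewrite hE // cmul0l.
have eL : msum L ≈ msum LB by rewrite /msum h1 -/(msum LA) hA cadd0.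
have hin : In (k, m) LA by apply: h5; [left | exists b0].
rewrite eL; apply: IH.
- by have := In_length_pos hin; lia.
- by move=> x /h3 [/hv].
- by move=> x /h3 [/hL].
- by move=> e he; rewrite -eL; apply: hE.
Qed.

Lemma regular_of_edges w F : (forall g, s g = w <-> In g F) -> F <> nil -> regular s w.
Proof.
move=> hF hF0; have [l [hnd hl]] := exists_NoDup_same F.
exists l; split; first by split=> // e; rewrite hl hF.
by move=> hl0; case: F hF hF0 hl => [|g F] // _ _ /(_ g); rewrite hl0 => -[_ /(_ (or_introl erefl))].
Qed.

Lemma msum_vert w L : (forall x, In x L -> mono_rvert x.2 = w) -> msum L ⊗ vert w ≈ msum L.
Proof.
move=> hL; rewrite /msum wsum_mulr; apply: eq_wsum => k m /hL <-.
exact: mono_val_vert.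
Qed.

Lemma msum_split_real w L : mono_valid_list L -> (forall x, In x L -> mono_rvert x.2 = w) ->
  exists R L1, msum L ≈ rsum w R ⊕ msum L1 /\ (forall y, In y R -> path_to y.2 w) /\
  (forall x, In x L1 -> In x L /\ mghost x.2 <> nil).
Proof.
move=> hv hL.
have [L0 [L1 [h1 [h2 [h3 _]]]]] := @wsum_partition _ mono_val (fun m => mghost m = nil) L.
have [R [hR1 hR2]] : exists R, msum L0 ≈ rsum w R /\ (forall y, In y R -> path_to y.2 w).
  apply: msum_real => x /h2 [hx hx2]; have [hva _] := hv _ hx.
  by move: (hL _ hx) hva; rewrite /mono_rvert hx2 /= => <-.
by exists R, L1; split; [rewrite /msum h1 -/(msum L0) hR1 | split].
Qed.

Lemma X_vert_eq0 (HX : forall v, X v -> regular s v) x w : X w -> x ⊗ vert w ≈ x ->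
  (forall e, s e = w -> x ⊗ edge e ≈ zero) -> x ≈ zero.
Proof.
move=> hX hxw hE; have [l [[hnd hin] _]] := HX _ hX.
rewrite -hxw (@ce_CK K V Ed r s X w l hX (conj hnd hin)).
by apply: sumEE_mulr_eq0 => e /hin; apply: hE.
Qed.

Lemma closed_path_exit_or_Y (HL : relative_condL r s X) u g : closed_path u g ->
  exists e, In e g /\ ((exists f, s f = s e /\ f <> e) \/ Yset s X (s e)).
Proof.
case=> hne [hv hst].
case: (classic (exists e, In e g /\ Yset s X (s e))) => [[e [he hy]]|hY].
  by exists e; split=> //; right.
case: g hne hv hst {hY} (hY) => [|e1 t] // _ hv hst hY.
have hlast : r (List.last (e1 :: t) e1) = s e1 by rewrite (path_to_last e1 _ hv) // -hst.
have [p [hp hpg]] := closed_is_path_cycle (path_to_is_path hv) hlast.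
have [f [e [he [hsf hef]]]] := HL p hp (fun e he hy => hY (ex_intro _ e (conj (hpg e he) hy))).
by exists e; split; [exact: hpg | left; exists f].
Qed.

Lemma qvert_loop_sum v l c C : enumerates s v l -> closed_list v C ->
  qvert v l ⊗ loop_sum v c C ≈ cscal c (qvert v l).
Proof.
move=> hen hC; rewrite /loop_sum cmulDr cscalMr qvert_vert // /rsum wsum_mull wsum_eq0 ?caddr0 //.
by move=> k a /hC [h1 [_ h3]]; apply: qvert_rpath.
Qed.

(** * Injectivity *)

Section Homomorphism.
Variables (A : pzRingType) (pi : T -> A).
Hypotheses (pi_wd : forall x y, x ≈ y -> pi x = pi y)
  (pi_add : forall x y, pi (x ⊕ y) = pi x + pi y)
  (pi_mul : forall x y, pi (x ⊗ y) = pi x * pi y).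

Lemma pi0 : pi zero = 0.
Proof.
have /eqP := pi_wd (cadd0 zero).
by rewrite pi_add -subr_eq0 addrK => /eqP.
Qed.
Lemma pi_eq0 x : x ≈ zero -> pi x = 0.
Proof. by move=> h; rewrite (pi_wd h) pi0. Qed.
Lemma pi_mul_eq0l x y : pi x = 0 -> pi (x ⊗ y) = 0.
Proof. by move=> h; rewrite pi_mul h mul0r. Qed.
Lemma pi_mul_eq0r x y : pi y = 0 -> pi (x ⊗ y) = 0.
Proof. by move=> h; rewrite pi_mul h mulr0. Qed.
Lemma pi_neg x : pi (cneg x) = - pi x.
Proof. by apply/eqP; rewrite -addr_eq0 -pi_add pi_eq0 // caddN. Qed.

(* [x = (c^-1 u) (c x)]: the vertex stands in for the missing unit. *)
Lemma pi_scal_eq0 c u x : c != 0 -> vert u ⊗ x ≈ x -> pi (cscal c x) = 0 -> pi x = 0.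
Proof.
move=> hc hu h.
have e : x ≈ cscal c^-1 (vert u) ⊗ cscal c x.
  by rewrite cscalMl cscalMr cscalA mulVf // cscal1 hu.
by rewrite (pi_wd e); apply: pi_mul_eq0r.
Qed.

Hypotheses (H1 : forall u, ~ Yset s X u -> pi (vert u) <> 0)
  (H2 : forall v l, Yset s X v -> enumerates s v l -> pi (qvert v l) <> 0).

Lemma pi_scal_qvert_neq0 v l c : Yset s X v -> enumerates s v l -> c != 0 ->
  pi (cscal c (qvert v l)) <> 0.
Proof. by move=> hy hen hc /(pi_scal_eq0 hc (vert_qvert hen)); apply: H2. Qed.

Lemma pi_scal_vert_neq0 c u : c != 0 -> pi (cscal c (vert u)) <> 0.
Proof.
move=> hc h; case: (classic (Yset s X u)) => hy; last first.
  exact: (H1 hy (pi_scal_eq0 hc (vert_idem u) h)).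
have [[l [hen _]] _] := hy.
apply: (pi_scal_qvert_neq0 hy hen hc).
have e : cscal c (qvert u l) ≈ qvert u l ⊗ cscal c (vert u) by rewrite cscalMr qvert_vert.
by rewrite (pi_wd e); apply: pi_mul_eq0r.
Qed.

Lemma pi_loop_sum_rotate tau : forall rho u c k C,
  closed_list u ((k, tau +++ rho) :: C) -> pi (loop_sum u c ((k, tau +++ rho) :: C)) = 0 ->
  exists u' C', closed_list u' ((k, rho +++ tau) :: C') /\ (length C' <= length C)%coq_nat /\
  pi (loop_sum u' c ((k, rho +++ tau) :: C')) = 0.
Proof.
elim: tau => [|e tau IH] rho u c k C hC hp.
  by exists u, C; rewrite app_nil_r.
have hu : s e = u by have [_ [_ h]] := hC _ (or_introl erefl).
subst u; have [C1 [h1 [h2 h3]]] := @conj_edge_loop_sum_rotate e c k (tau +++ rho) C hC.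
rewrite -app_assoc /= in h1 h2.
have hp1 : pi (loop_sum (r e) c ((k, tau +++ rho +++ [:: e]) :: C1)) = 0.
  by rewrite -(pi_wd h1); apply: pi_mul_eq0l; apply: pi_mul_eq0r.
have [u' [C' [g1 [g2 g3]]]] := IH _ _ _ _ _ h2 hp1.
rewrite -app_assoc /= in g1 g3.
by exists u', C'; do !split=> //; lia.
Qed.

Hypothesis HL : relative_condL r s X.

(* A loop is removed either by conjugating with an exit or, at a vertex of
   [Y], by the gap idempotent; Relative Condition (L) ensures one applies. *)
Lemma pi_loop_sum_neq0 C : forall u c, c != 0 -> closed_list u C -> pi (loop_sum u c C) <> 0.
Proof.
elim/(measure_ind (f := @length (K * list Ed))): C => C IH u c hc hC hp.
case: C IH hC hp => [|[k g] C0] IH hC hp.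
  by apply: (pi_scal_vert_neq0 hc); rewrite -hp; apply: pi_wd; rewrite /loop_sum /= caddr0.
have [e [he hexit]] := closed_path_exit_or_Y HL (hC _ (or_introl erefl)).
have /= [tau [rho htr]] := in_split _ _ he; subst g.
have [u' [C' [g1 [g2 g3]]]] := pi_loop_sum_rotate hC hp.
have hu : s e = u' by have [_ [_ h]] := g1 _ (or_introl erefl).
subst u'; case: hexit => [[f [hf hfe]]|hy].
  rewrite -hf in g1 g3.
  have [C'' [k1 [k2 k3]]] := conj_edge_loop_sum_drop c (nesym hfe) g1.
  apply: (IH C'' _ (r f) c hc k2); first by move: g2 k3 => /=; lia.
  by rewrite -(pi_wd k1); apply: pi_mul_eq0l; apply: pi_mul_eq0r.
have [[l [hen _]] _] := hy.
apply: (pi_scal_qvert_neq0 hy hen hc).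
by rewrite -(pi_wd (qvert_loop_sum c hen g1)); apply: pi_mul_eq0r.
Qed.

Definition loop_faithful w t :=
  forall c C, c != 0 -> closed_list w C -> pi (loop_sum w c C ⊗ t) <> 0.

(* Multiplying by the ghost of a shortest term turns a combination of paths
   with a common source into a loop sum whose vertex coefficient is the total
   weight of that shortest path. *)
Lemma rsum_same_src_eq0 w t u0 : loop_faithful w t -> forall L,
  (forall x, In x L -> path_to x.2 w /\ path_src x.2 w = u0) ->
  pi (rsum w L ⊗ t) = 0 -> rsum w L ≈ zero.
Proof.
move=> ht; elim/(measure_ind (f := @length (K * list Ed))) => L IH hL hp.
case: L IH hL hp => [|x0 L0] IH hL hp //; set L := x0 :: L0 in IH hL hp *.
have [x [hx hmin]] := @exists_argmin _ (fun y => length y.2) L ltac:(done).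
have [hvx hsx] := hL x hx.
have [LA [LB [h1 [h2 [h3 [h4 h5]]]]]] := @wsum_partition _ (fun a => rpath a w) (fun a => a = x.2) L.
have [c hc] : exists c, rsum w LA ≈ cscal c (rpath x.2 w).
  exact: wsum_const (fun y hy => (h2 y hy).2).
have [C [hC1 hC2]] : exists C, gpath x.2 w ⊗ rsum w LB ≈ rsum w C /\ closed_list w C.
  apply: gpath_rsum_closed => // y /h3 [hy hne]; have [? ?] := hL y hy.
  by do !split=> //; [congruence | exact: hmin].
have hsplit : rsum w L ≈ rsum w LA ⊕ rsum w LB by [].
have key : gpath x.2 w ⊗ rsum w L ≈ loop_sum w c C.
  by rewrite hsplit cmulDr hc cscalMr gpath_rpath_self // hC1.
case: (eqVneq c 0) => [c0|cn0]; last first.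
  have e : loop_sum w c C ⊗ t ≈ gpath x.2 w ⊗ (rsum w L ⊗ t) by rewrite cmulA key.
  by exfalso; apply: (ht c C cn0 hC2); rewrite (pi_wd e); apply: pi_mul_eq0r.
have eL : rsum w L ≈ rsum w LB by rewrite hsplit hc c0 cscal0x cadd0.
rewrite eL; apply: IH => [|y /h3 [/hL] //|]; last by rewrite -hp; apply: pi_wd; rewrite eL.
by have := In_length_pos (h5 _ hx erefl); lia.
Qed.

Lemma rsum_eq0 w t : loop_faithful w t -> forall L,
  (forall x, In x L -> path_to x.2 w) -> pi (rsum w L ⊗ t) = 0 -> rsum w L ≈ zero.
Proof.
move=> ht; elim/(measure_ind (f := @length (K * list Ed))) => L IH hL hp.
case: L IH hL hp => [|[k a] L0] IH hL hp //; set L := (k, a) :: L0 in IH hL hp *.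
have [LA [LB [h1 [h2 [h3 [h4 h5]]]]]] :=
  @wsum_partition _ (fun a' => rpath a' w) (fun a' => path_src a' w = path_src a w) L.
have eA : vert (path_src a w) ⊗ rsum w L ≈ rsum w LA.
  have eB : vert (path_src a w) ⊗ rsum w LB ≈ zero.
    by rewrite /rsum wsum_mull; apply: wsum_eq0 => k' a' /h3 [_ hne]; apply: vert_rpath_ne; auto.
  rewrite /rsum h1 -/(rsum w LB) cmulDr eB caddr0 /rsum wsum_mull.
  by apply: eq_wsum => k' a' /h2 [_ /= <-]; rewrite vert_rpath.
have hA : rsum w LA ≈ zero.
  apply: (rsum_same_src_eq0 ht (u0 := path_src a w)) => [x /h2 [/hL]|] //.
  have e : rsum w LA ⊗ t ≈ vert (path_src a w) ⊗ (rsum w L ⊗ t) by rewrite cmulA eA.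
  by rewrite (pi_wd e); apply: pi_mul_eq0r.
have eB : rsum w L ≈ rsum w LB by rewrite /rsum h1 -/(rsum w LA) hA cadd0.
rewrite eB; apply: IH => [|x /h3 [/hL] //|]; last by rewrite -hp; apply: pi_wd; rewrite eB.
by have := In_length_pos (h5 _ (or_introl erefl) erefl); lia.
Qed.

Lemma loop_faithful_vert w : loop_faithful w (vert w).
Proof.
move=> c C hc hC; have e : loop_sum w c C ⊗ vert w ≈ loop_sum w c C.
  rewrite /loop_sum cmulDl cscalMl vert_idem /rsum wsum_mulr; apply: ce_add => //.
  by apply: eq_wsum => k a _; rewrite rpath_vert.
by rewrite (pi_wd e); apply: pi_loop_sum_neq0.
Qed.
Lemma loop_faithful_qvert w l : Yset s X w -> enumerates s w l -> loop_faithful w (qvert w l).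
Proof.
move=> hy hen c C hc hC hp; apply: (pi_scal_qvert_neq0 hy hen hc).
have e : qvert w l ⊗ (loop_sum w c C ⊗ qvert w l) ≈ cscal c (qvert w l).
  by rewrite cmulA qvert_loop_sum // cscalMl qvert_idem.
by rewrite -(pi_wd e); apply: pi_mul_eq0r.
Qed.
Lemma loop_faithful_edge g : loop_faithful (s g) (edge g).
Proof.
move=> c C hc hC hp.
have [C' [h1 [h2 _]]] := conj_edge_rsum hC.
apply: (pi_loop_sum_neq0 hc h2).
have e : ghost g ⊗ (loop_sum (s g) c C ⊗ edge g) ≈ loop_sum (r g) c C'.
  by rewrite cmulA -/(conj_edge _ _) /loop_sum conj_edgeD conj_edgeZ conj_edge_vert h1.
by rewrite -(pi_wd e); apply: pi_mul_eq0r.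
Qed.

Lemma msum_rsum_eq0 w L R : (forall x, In x L -> mono_rvert x.2 = w) ->
  msum L ≈ rsum w R -> (forall y, In y R -> path_to y.2 w) -> pi (msum L) = 0 ->
  msum L ≈ zero.
Proof.
move=> hL e hR hp; rewrite e; apply: (rsum_eq0 (loop_faithful_vert (w := w))) => //.
by rewrite -hp; apply: pi_wd; rewrite -e msum_vert.
Qed.

Lemma Y_msum_eq0 w l x R L1 : Yset s X w -> enumerates s w l ->
  x ≈ rsum w R ⊕ msum L1 -> (forall y, In y R -> path_to y.2 w) ->
  (forall y, In y L1 -> mono_rvert y.2 = w /\ mghost y.2 <> nil) ->
  x ⊗ vert w ≈ x -> (forall e, s e = w -> x ⊗ edge e ≈ zero) -> pi x = 0 -> x ≈ zero.
Proof.
move=> hY hen hsplit hR hL1 hxw hE hp.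
have e1 : x ≈ x ⊗ qvert w l.
  rewrite -{1}hxw (vert_decomp w l) cmulDr (@sumEE_mulr_eq0 l) ?caddr0 //.
  by case: hen => _ hin e /hin; apply: hE.
have e2 : msum L1 ⊗ qvert w l ≈ zero.
  rewrite /msum wsum_mulr; apply: wsum_eq0 => k [a [|f b] v] /hL1 /= [hr hne] //.
  by rewrite /mono_val /= -!cmulA ghost_qvert ?cmul0r.
have e3 : x ≈ rsum w R ⊗ qvert w l by rewrite e1 {1}hsplit cmulDl e2 caddr0.
rewrite e3 (rsum_eq0 (loop_faithful_qvert hY hen) hR) ?cmul0l //.
by rewrite -hp; apply: pi_wd; rewrite -e3.
Qed.

Definition first_ghosts (L : list (K * monomial)) :=
  List.flat_map (fun x : K * monomial => if mghost x.2 is f :: _ then [:: f] else nil) L.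

Lemma first_ghosts_src w L :
  (forall x, In x L -> mono_rvert x.2 = w) -> forall f, In f (first_ghosts L) -> s f = w.
Proof.
move=> hL f /in_flat_map [x [/hL]]; rewrite /mono_rvert.
by case: (mghost x.2) => [|g b] //= <- [<-|].
Qed.

Lemma unused_edge_msum_eq0 w g x R L1 : s g = w -> ~ In g (first_ghosts L1) ->
  x ≈ rsum w R ⊕ msum L1 -> (forall y, In y R -> path_to y.2 w) -> mono_valid_list L1 ->
  (forall y, In y L1 -> mono_rvert y.2 = w /\ mghost y.2 <> nil) ->
  (forall e, s e = w -> x ⊗ edge e ≈ zero) -> x ≈ zero.
Proof.
move=> hg hgF hsplit hR hv hL1 hE.
have eg : msum L1 ⊗ edge g ≈ zero.
  apply: msum_first_ghost_ne => y hy; have [_] := hL1 y hy.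
  case hb : (mghost y.2) => [|f b] // _; exists f, b; split=> // hfg; apply: hgF.
  by apply/in_flat_map; exists y; rewrite hb hfg; split=> //; left.
have hR0 : rsum w R ≈ zero.
  rewrite -hg; apply: (rsum_eq0 (loop_faithful_edge (g := g))); rewrite hg //.
  by apply: pi_eq0; rewrite -(hE g hg) hsplit cmulDl eg caddr0.
have eL : x ≈ msum L1 by rewrite hsplit hR0 cadd0.
by rewrite eL; apply: (msum_ghost_eq0 hv hL1) => e he; rewrite -eL; apply: hE.
Qed.

Hypothesis HX : forall v, X v -> regular s v.

(* At a vertex [w] which is neither in [X] nor in [Y] the edges leaving [w]
   cannot all occur as first ghost edges, since [w] is then not regular. *)
Lemma msum_eq0_of_edges w L : mono_valid_list L -> (forall x, In x L -> mono_rvert x.2 = w) ->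
  pi (msum L) = 0 -> (forall e, s e = w -> msum L ⊗ edge e ≈ zero) -> msum L ≈ zero.
Proof.
move=> hv hL hp hE.
have [R [L1 [hsplit [hR hL1]]]] := msum_split_real hv hL.
have hL1' y : In y L1 -> mono_rvert y.2 = w /\ mghost y.2 <> nil.
  by move=> /hL1 [/hL].
case: (classic (L1 = nil)) => [hnil|hL1ne].
  by apply: (msum_rsum_eq0 hL _ hR hp); rewrite hsplit hnil /msum /= caddr0.
case: (classic (X w)) => hX; first exact: (X_vert_eq0 HX hX (msum_vert hL) hE).
case: (classic (Yset s X w)) => hY.
  by have [[l [hen _]] _] := hY; apply: (Y_msum_eq0 hY hen hsplit hR hL1' (msum_vert hL)).
case: (classic (exists g, s g = w /\ ~ In g (first_ghosts L1))) => [[g [hg hgF]]|hall].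
  by apply: (unused_edge_msum_eq0 hg hgF hsplit hR _ hL1') => // y /hL1 [/hv].
exfalso; apply: hY; split=> //; apply: (@regular_of_edges _ (first_ghosts L1)).
  move=> g; split=> [hg|]; last by apply: first_ghosts_src => y /hL1 [/hL].
  by apply: NNPP => hn; apply: hall; exists g.
case: L1 hL1ne hL1' {hsplit hL1 hall} => [|y L1] // _ /(_ y (or_introl erefl)) [_].
by rewrite /first_ghosts /=; case: (mghost y.2).
Qed.

Lemma msum_same_rvert_eq0 n : forall w L, mono_valid_list L ->
  (forall x, In x L -> mono_rvert x.2 = w /\ (length (mghost x.2) <= n)%coq_nat) ->
  pi (msum L) = 0 -> msum L ≈ zero.
Proof.
elim: n => [|n IH] w L hv hL hp.
  have [R [e hR]] : exists R, msum L ≈ rsum w R /\ (forall y, In y R -> path_to y.2 w).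
    apply: msum_real => x hx; have [hr hl] := hL x hx; have [hva _] := hv x hx.
    have hb : mghost x.2 = nil by case: (mghost x.2) hl => //= ? ? ?; lia.
    by move: hr hva; rewrite /mono_rvert hb /= => <-.
  by apply: (msum_rsum_eq0 _ e hR hp) => x /hL [].
apply: (msum_eq0_of_edges (w := w) hv _ hp) => [x /hL [] //|e he].
have [L' [e1 [hv' hL']]] := @msum_mul_edge n e L hv (fun x hx => (hL x hx).2).
rewrite e1; apply: (IH (r e)) => //.
by rewrite -(pi_wd e1); apply: pi_mul_eq0l.
Qed.

Lemma msum_eq0 L : mono_valid_list L -> pi (msum L) = 0 -> msum L ≈ zero.
Proof.
elim/(measure_ind (f := @length (K * monomial))): L => L IH hv hp.
case: L IH hv hp => [|[k m] L0] IH hv hp //; set L := (k, m) :: L0 in IH hv hp *.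
have [LA [LB [h1 [h2 [h3 [h4 h5]]]]]] :=
  @wsum_partition _ mono_val (fun m' => mono_rvert m' = mono_rvert m) L.
have eA : msum L ⊗ vert (mono_rvert m) ≈ msum LA.
  have eB : msum LB ⊗ vert (mono_rvert m) ≈ zero.
    by rewrite /msum wsum_mulr; apply: wsum_eq0 => k' a /h3 [_ hn]; apply: mono_val_vert_ne; auto.
  by rewrite /msum h1 -/(msum LB) cmulDl eB caddr0; apply: msum_vert => x /h2 [].
have [nb hnb] := ghost_length_bound LA.
have hA : msum LA ≈ zero.
  apply: (@msum_same_rvert_eq0 nb (mono_rvert m)).
  - by move=> x /h2 [/hv].
  - by move=> x hx; split; [have [] := h2 x hx | apply: hnb].
  - by rewrite -(pi_wd eA); apply: pi_mul_eq0l.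
have eB : msum L ≈ msum LB by rewrite /msum h1 -/(msum LA) hA cadd0.
rewrite eB; apply: IH => [|x /h3 [/hv] //|]; last by rewrite -hp; apply: pi_wd; rewrite eB.
by have := In_length_pos (h5 _ (or_introl erefl) erefl); lia.
Qed.

Lemma pi_injective x y : pi x = pi y -> x ≈ y.
Proof.
move=> h; apply: csubr_eq0; have [L [hL hv]] := normal_form (x ⊕ cneg y).
rewrite hL; apply: msum_eq0 => //.
by rewrite -(pi_wd hL) pi_add pi_neg h subrr.
Qed.
End Homomorphism.
End CohnAlgebra.

Unset Implicit Arguments.

Theorem mainTheorem6 (K : fieldType) (V Ed : Type) (r s : Ed -> V) (X : V -> Prop)
  (HX : forall v, X v -> regular s v)
  (HL : relative_condL r s X)
  (A : pzRingType) (pi : cterm K V Ed -> A)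
  (pi_wd : forall x y, cohn_eq r s X x y -> pi x = pi y)
  (pi_add : forall x y, pi (cadd x y) = pi x + pi y)
  (pi_mul : forall x y, pi (cmul x y) = pi x * pi y)
  (H1 : forall u, ~ Yset s X u -> pi (cV K Ed u) <> 0)
  (H2 : forall v l, Yset s X v -> enumerates s v l ->
          pi (cadd (cV K Ed v) (cneg (sumEE K V l))) <> 0)
  (H3 : forall v l, Yset s X v -> enumerates s v l -> pi (sumEE K V l) <> 0) :
  forall x y, pi x = pi y -> cohn_eq r s X x y.
Proof.
exact: (pi_injective pi_wd pi_add pi_mul H1 H2 HL HX).
Qed.
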